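(* For any $\lambda\in K^*$, the algebras $\Lambda(\mathbb S,\lambda)$ and $\operatorname{T}(B(\lambda))$ are isomorphic.
   Context: $K$ is an algebraically closed field. For an algebra $B$, the trivial extension $\operatorname{T}(B)=B\ltimes D(B)$ is $B\oplus D(B)$, $D(B)=\operatorname{Hom}_K(B,K)$, with multiplication $(b_1,f_1)(b_2,f_2)=(b_1b_2,b_1f_2+f_1b_2)$. $B(\lambda)$ is the algebra given by the quiver with vertices $1,\dots,6$ and arrows $\alpha:3\to1$, $\sigma:3\to2$, $\gamma:4\to1$, $\beta:4\to2$, $\xi:5\to3$, $\eta:5\to4$, $\mu:6\to3$, $\omega:6\to4$, and relations $\eta\gamma=\xi\alpha$, $\xi\sigma=\lambda\eta\beta$, $\mu\alpha=\omega\gamma$, $\omega\beta=\mu\sigma$ (paths composed left to right). $\Lambda(\mathbb S,\lambda)$ is the algebra given by the quiver with vertices $1,\dots,6$ and arrows $\alpha:3\to1$, $\beta:4\to2$, $\gamma:4\to1$, $\delta:1\to5$, $\varepsilon:2\to5$, $\eta:5\to4$, $\xi:5\to3$, $\varrho:2\to6$, $\sigma:3\to2$, $\mu:6\to3$, $\nu:1\to6$, $\omega:6\to4$, and relations $\delta\eta=\nu\omega$, $\eta\gamma=\xi\alpha$, $\gamma\delta=\lambda\beta\varepsilon$, $\varrho\omega=\lambda\varepsilon\eta$, $\omega\beta=\mu\sigma$, $\beta\varrho=\gamma\nu$, $\sigma\varepsilon=\alpha\delta$, $\varepsilon\xi=\varrho\mu$, $\xi\sigma=\lambda\eta\beta$,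 $\alpha\nu=\sigma\varrho$, $\nu\mu=\delta\xi$, $\mu\alpha=\omega\gamma$, and $\delta\eta\beta=\eta\gamma\nu=\gamma\delta\xi=\varrho\omega\gamma=\omega\beta\varepsilon=\beta\varrho\mu=\sigma\varepsilon\eta=\varepsilon\xi\alpha=\xi\sigma\varrho=\alpha\nu\omega=\nu\mu\sigma=\mu\alpha\delta=0$. (This is the tetrahedral algebra $\Lambda(\mathbb S,\lambda,1,1,1)$.) *)

From HB Require Import structures.
From mathcomp Require Import all_boot all_order all_algebra falgebra.
Set Implicit Arguments. Unset Strict Implicit. Unset Printing Implicit Defensive.
Import GRing.Theory.
Local Open Scope ring_scope.

Definition is_alg_hom (K : fieldType) (A C : algType K) (f : A -> C) : Prop :=
  [/\ forall (c : K) (x y : A), f (c *: x + y) = c *: f x + f y,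
      forall x y : A, f (x * y) = f x * f y
    & f 1 = 1].

(* Representations of the path algebra KQ of a quiver Q with vertex set *)
(* 'I_n and arrow type Ar (source s, target t) in a K-algebra C: a       *)
(* complete family of orthogonal idempotents e_i (one per vertex) and    *)
(* elements a_k (one per arrow) with a_k = e_(s k) a_k e_(t k).          *)
(* Paths are composed LEFT TO RIGHT: an arrow k : i -> j lies in         *)
(* e_i C e_j, and the product p q is the path "p then q".               *)
Definition quiver_rep (K : fieldType) (n : nat) (Ar : Type)
    (s t : Ar -> 'I_n) (C : algType K) (e : 'I_n -> C) (a : Ar -> C) : Prop :=
  [/\ forall i j : 'I_n, e i * e j = (if i == j then e i else 0),
      \sum_(i < n) e i = 1
    & forall k : Ar, a k = e (s k) * a k * e (t k)].

(* A is "the algebra given by the quiver Q (s,t) and the relations Rel",  *)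
(* i.e. the K-algebra presented by these generators and relations         *)
(* (KQ modulo the ideal generated by the relations), characterised by    *)
(* its universal property: (A, e, a) satisfies the relations, and for    *)
(* every K-algebra C with such data there is exactly one unital algebra  *)
(* homomorphism A -> C sending generators to generators.                 *)
Definition presented_by (K : fieldType) (n : nat) (Ar : Type)
    (s t : Ar -> 'I_n)
    (Rel : forall C : algType K, ('I_n -> C) -> (Ar -> C) -> Prop)
    (A : algType K) (e : 'I_n -> A) (a : Ar -> A) : Prop :=
  [/\ quiver_rep s t e a, Rel A e a
    & forall (C : algType K) (e' : 'I_n -> C) (a' : Ar -> C),
        quiver_rep s t e' a' -> Rel C e' a' ->
        (exists f : A -> C, [/\ is_alg_hom f, f \o e =1 e' & f \o a =1 a'])
        /\ (forall f g : A -> C,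
              is_alg_hom f -> f \o e =1 e' -> f \o a =1 a' ->
              is_alg_hom g -> g \o e =1 e' -> g \o a =1 a' -> f =1 g)].

Definition vtx (k : nat) : 'I_6 := inord k.-1.

Inductive BArr := Ba_alpha | Ba_sigma | Ba_gamma | Ba_beta
                | Ba_xi | Ba_eta | Ba_mu | Ba_omega.

Definition B_src (x : BArr) : 'I_6 :=
  match x with
  | Ba_alpha => vtx 3 | Ba_sigma => vtx 3 | Ba_gamma => vtx 4 | Ba_beta => vtx 4
  | Ba_xi => vtx 5 | Ba_eta => vtx 5 | Ba_mu => vtx 6 | Ba_omega => vtx 6
  end.
Definition B_tgt (x : BArr) : 'I_6 :=
  match x with
  | Ba_alpha => vtx 1 | Ba_sigma => vtx 2 | Ba_gamma => vtx 1 | Ba_beta => vtx 2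
  | Ba_xi => vtx 3 | Ba_eta => vtx 4 | Ba_mu => vtx 3 | Ba_omega => vtx 4
  end.

Definition B_rel (K : fieldType) (lam : K) (C : algType K)
    (e : 'I_6 -> C) (a : BArr -> C) : Prop :=
  let alpha := a Ba_alpha in let sigma := a Ba_sigma in
  let gamma := a Ba_gamma in let beta := a Ba_beta in
  let xi := a Ba_xi in let eta := a Ba_eta in
  let mu := a Ba_mu in let omega := a Ba_omega in
  [/\ eta * gamma = xi * alpha,
      xi * sigma = lam *: (eta * beta),
      mu * alpha = omega * gamma
    & omega * beta = mu * sigma].

(* The tetrahedral algebra Lambda(S, lambda) = Lambda(S, lambda, 1,1,1). *)
Inductive LArr := La_alpha | La_beta | La_gamma | La_delta | La_eps | La_eta
                | La_xi | La_rho | La_sigma | La_mu | La_nu | La_omega.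

Definition L_src (x : LArr) : 'I_6 :=
  match x with
  | La_alpha => vtx 3 | La_beta => vtx 4 | La_gamma => vtx 4 | La_delta => vtx 1
  | La_eps => vtx 2 | La_eta => vtx 5 | La_xi => vtx 5 | La_rho => vtx 2
  | La_sigma => vtx 3 | La_mu => vtx 6 | La_nu => vtx 1 | La_omega => vtx 6
  end.
Definition L_tgt (x : LArr) : 'I_6 :=
  match x with
  | La_alpha => vtx 1 | La_beta => vtx 2 | La_gamma => vtx 1 | La_delta => vtx 5
  | La_eps => vtx 5 | La_eta => vtx 4 | La_xi => vtx 3 | La_rho => vtx 6
  | La_sigma => vtx 2 | La_mu => vtx 3 | La_nu => vtx 6 | La_omega => vtx 4
  end.

Definition L_rel (K : fieldType) (lam : K) (C : algType K)
    (e : 'I_6 -> C) (a : LArr -> C) : Prop :=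
  let alpha := a La_alpha in let beta := a La_beta in
  let gamma := a La_gamma in let delta := a La_delta in
  let eps := a La_eps in let eta := a La_eta in
  let xi := a La_xi in let rho := a La_rho in
  let sigma := a La_sigma in let mu := a La_mu in
  let nu := a La_nu in let omega := a La_omega in
  [/\ [/\ delta * eta = nu * omega,
          eta * gamma = xi * alpha,
          gamma * delta = lam *: (beta * eps),
          rho * omega = lam *: (eps * eta)
        & omega * beta = mu * sigma],
      [/\ beta * rho = gamma * nu,
          sigma * eps = alpha * delta,
          eps * xi = rho * mu,
          xi * sigma = lam *: (eta * beta)
        & alpha * nu = sigma * rho],
      [/\ nu * mu = delta * xi
        & mu * alpha = omega * gamma],
      [/\ delta * eta * beta = 0,
          eta * gamma * nu = 0,
          gamma * delta * xi = 0,
          rho * omega * gamma = 0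
        & omega * beta * eps = 0]
    & [/\ [/\ beta * rho * mu = 0,
              sigma * eps * eta = 0,
              eps * xi * alpha = 0
            & xi * sigma * rho = 0],
          alpha * nu * omega = 0,
          nu * mu * sigma = 0
        & mu * alpha * delta = 0]].

(* Trivial extension T(B) = B |x D(B), D(B) = Hom_K(B, K), on the      *)
(* K-space B * D(B), with the standard B-bimodule structure of D(B):  *)
(* (b . f)(x) = f(x b),  (f . b)(x) = f(b x).                           *)
Definition dual_lact (K : fieldType) (B : falgType K) (b : B)
    (f : 'Hom(B, K^o)) : 'Hom(B, K^o) := linfun (fun x : B => f (x * b)).
Definition dual_ract (K : fieldType) (B : falgType K) (f : 'Hom(B, K^o))
    (b : B) : 'Hom(B, K^o) := linfun (fun x : B => f (b * x)).

Definition triv_ext_mul (K : fieldType) (B : falgType K)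
    (u v : B * 'Hom(B, K^o)) : B * 'Hom(B, K^o) :=
  (u.1 * v.1, dual_lact u.1 v.2 + dual_ract u.2 v.1).

Definition iso_triv_ext (K : fieldType) (A : algType K) (B : falgType K)
    (phi : A -> B * 'Hom(B, K^o)) : Prop :=
  [/\ bijective phi,
      forall (c : K) (x y : A), phi (c *: x + y) = c *: phi x + phi y,
      forall x y : A, phi (x * y) = triv_ext_mul (phi x) (phi y)
    & phi 1 = (1, 0)].

From HB Require Import structures.
From mathcomp Require Import all_boot all_order all_algebra falgebra.
From mathcomp Require Import boolp.
From Stdlib Require List.
Set Implicit Arguments. Unset Strict Implicit. Unset Printing Implicit Defensive.
Import GRing.Theory.
Local Open Scope ring_scope.

(* Write B = B(λ), Λ = Λ(S, λ) and T(B) = B ⋉ D(B).  Both Λ and B are presented by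
   generators and relations, so algebra maps out of them are determined by the images of
   the generators.  Send the idempotents and the eight arrows that Λ shares with B to the
   elements (b, 0) of T(B), and the four remaining arrows δ : 1 → 5, ε : 2 → 5, ν : 1 → 6,
   ρ : 2 → 6 to (0, φ), with φ a multiple of the coordinate functional of the path
   5 → 1, 5 → 2, 6 → 1, 6 → 2 of B; the relations of Λ hold in T(B), giving an algebra map
   f : Λ → T(B).  Reducing products of generators to normal form shows that B is spanned
   by 18 paths and Λ by 36; f maps 18 of these onto the paths of B and the other 18 onto
   a family of functionals dual to them, hence f is bijective.  As B is known only through
   its universal property, the coordinate functionals are obtained as matrix coefficients
   of two thin representations of B. *)

Section AlgHom.
Variables (K : fieldType) (A C : algType K) (f : A -> C).
Hypothesis f_hom : is_alg_hom f.

Lemma alg_homD x y : f (x + y) = f x + f y.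
Proof. by case: f_hom => f_lin _ _; have := f_lin 1 x y; rewrite !scale1r. Qed.

Lemma alg_hom0 : f 0 = 0.
Proof. by apply: (addrI (f 0)); rewrite -alg_homD !addr0. Qed.

Lemma alg_homZ c x : f (c *: x) = c *: f x.
Proof. by case: f_hom => f_lin _ _; rewrite -[c *: x]addr0 f_lin alg_hom0 addr0. Qed.

Lemma alg_homM x y : f (x * y) = f x * f y.
Proof. by case: f_hom. Qed.

End AlgHom.

Lemma alg_hom_comp (K : fieldType) (A B C : algType K) (f : A -> B) (g : B -> C) :
  is_alg_hom f -> is_alg_hom g -> is_alg_hom (g \o f).
Proof.
by move=> [f1 f2 f3] [g1 g2 g3]; split=> [c x y|x y|] /=; rewrite ?f1 ?g1 ?f2 ?g2 ?f3 ?g3.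
Qed.

Definition linear_of (K : fieldType) (U V : lmodType K) (f : U -> V) (f_lin : linear f) :
  {linear U -> V} := HB.pack f (GRing.isLinear.Build K U V *:%R f f_lin).

Lemma lfunE_linear (K : fieldType) (U V : vectType K) (f : U -> V) :
  linear f -> linfun f =1 f.
Proof. by move=> f_lin; apply: (lfunE (linear_of f_lin)). Qed.

Lemma scale_regularE (K : fieldType) (k y : K) : k *: (y : K^o) = k * y.
Proof. by []. Qed.

Lemma pair_sum (W1 W2 : nmodType) (n : nat) (F1 : 'I_n -> W1) (F2 : 'I_n -> W2) :
  \sum_i (F1 i, F2 i) = (\sum_i F1 i, \sum_i F2 i).
Proof. by apply: (big_rec3 (fun s a b => s = (a, b))) => // i p a b _ ->. Qed.

Lemma sum_ord_delta (K : fieldType) (W : lmodType K) (n : nat) (F : nat -> W) q :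
  (q < n)%N -> \sum_(r < n) (q == r)%:R *: F r = F q.
Proof.
move=> lt_qn; rewrite (bigD1 (Ordinal lt_qn)) //= eqxx scale1r big1 ?addr0 // => r.
by rewrite -val_eqE eq_sym => /negbTE /= ->; rewrite scale0r.
Qed.

Lemma In_nth (T : Type) (x0 : T) (s : seq T) i : (i < size s)%N -> List.In (nth x0 s i) s.
Proof. by elim: s i => [|y s IH] [|i] //= lt_is; [left | right; apply: IH]. Qed.

Section Span.
Variables (K : fieldType) (V : lmodType K).

Definition in_span (s : seq V) (v : V) : Prop :=
  exists c : nat -> K, v = \sum_(i < size s) c i *: s`_i.

Variable s : seq V.

Lemma in_span0 : in_span s 0.
Proof. by exists (fun=> 0); rewrite big1 // => i _; rewrite scale0r. Qed.

Lemma in_spanD u v : in_span s u -> in_span s v -> in_span s (u + v).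
Proof.
move=> [c ->] [d ->]; exists (fun i => c i + d i).
by rewrite -big_split; apply: eq_bigr => i _; rewrite scalerDl.
Qed.

Lemma in_spanZ k v : in_span s v -> in_span s (k *: v).
Proof.
move=> [c ->]; exists (fun i => k * c i).
by rewrite scaler_sumr; apply: eq_bigr => i _; rewrite scalerA.
Qed.

Lemma in_span_sum (I : Type) (r : seq I) (F : I -> V) :
  (forall i, in_span s (F i)) -> in_span s (\sum_(i <- r) F i).
Proof. by move=> sF; elim/big_ind: _ => //; [exact: in_span0 | exact: in_spanD]. Qed.

Lemma in_span_nth i : (i < size s)%N -> in_span s s`_i.
Proof.
move=> lt_is; exists (fun j => (i == j)%:R).
by rewrite (sum_ord_delta (fun j => s`_j)).
Qed.

Lemma in_span_In v : List.In v s -> in_span s v.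
Proof.
have mem_v : List.In v s -> v \in s.
  by elim: s => //= x s' IH [->|/IH v_s']; rewrite inE ?eqxx ?v_s' ?orbT.
by move=> /mem_v v_s; rewrite -(nth_index 0 v_s); apply: in_span_nth; rewrite index_mem.
Qed.

End Span.

Lemma in_span_cat (K : fieldType) (V : lmodType K) (s1 s2 : seq V) v :
  in_span (s1 ++ s2) v -> exists c1 c2 : nat -> K,
    v = \sum_(i < size s1) c1 i *: s1`_i + \sum_(i < size s2) c2 i *: s2`_i.
Proof.
move=> [c ->]; exists c, (fun i => c (size s1 + i)).
rewrite size_cat big_split_ord /=; congr (_ + _); apply: eq_bigr => i _.
  by rewrite nth_cat ltn_ord.
by rewrite nth_cat ltnNge leq_addr /= addKn.
Qed.

Lemma lfun_eq_on_span (K : fieldType) (V W : vectType K) (s : seq V) (phi psi : 'Hom(V, W)) :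
  (forall v, in_span s v) -> (forall y, List.In y s -> phi y = psi y) -> phi = psi.
Proof.
move=> s_span eq_s; apply/lfunP => v; have [c ->] := s_span v.
by rewrite !linear_sum; apply: eq_bigr => i _; rewrite !linearZ /= eq_s //; apply: In_nth.
Qed.

Definition reflected_by_injections (K : fieldType) (n : nat) (Ar : Type)
    (Rel : forall C : algType K, ('I_n -> C) -> (Ar -> C) -> Prop) : Prop :=
  forall (C D : algType K) (f : C -> D) (e' : 'I_n -> C) (a' : Ar -> C)
         (e : 'I_n -> D) (a : Ar -> D),
    is_alg_hom f -> injective f -> (forall i, f (e' i) = e i) ->
    (forall k, f (a' k) = a k) -> Rel D e a -> Rel C e' a'.

Section PresentedSpan.
Variables (K : fieldType) (n : nat) (Ar : Type) (s t : Ar -> 'I_n)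
  (Rel : forall C : algType K, ('I_n -> C) -> (Ar -> C) -> Prop)
  (A : algType K) (e : 'I_n -> A) (a : Ar -> A) (P : seq A).

Definition left_stabilizer : {pred A} :=
  fun x => `[< forall y, in_span P y -> in_span P (x * y) >].

Lemma left_stabilizer_subalg_closed : subalg_closed left_stabilizer.
Proof.
split=> [|c u v /asboolP uP /asboolP vP|u v /asboolP uP /asboolP vP]; apply/asboolP.
- by move=> y; rewrite mul1r.
- by move=> y Py; rewrite mulrDl -scalerAl; apply: in_spanD; [apply/in_spanZ/uP|apply: vP].
- by move=> y Py; rewrite -mulrA; apply/uP/vP.
Qed.

HB.instance Definition _ := GRing.isSubalgClosed.Build K A left_stabilizer
  (GRing.subalg_closed_semi left_stabilizer_subalg_closed).
Record stabilizer := Stabilizer { stab_val :> A; _ : stab_val \in left_stabilizer }.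
HB.instance Definition _ := [isSub for stab_val].
HB.instance Definition _ := [Choice of stabilizer by <:].
HB.instance Definition _ := [SubChoice_isSubAlgebra of stabilizer by <:].

Lemma stab_val_alg_hom : is_alg_hom stab_val.
Proof. by split=> [c u v|u v|] /=; rewrite ?linearP ?rmorphM ?rmorph1. Qed.

Lemma left_stabilizerP x :
  (forall y, List.In y P -> in_span P (x * y)) -> x \in left_stabilizer.
Proof.
move=> xP; apply/asboolP => _ [c ->]; rewrite mulr_sumr; apply: in_span_sum => j.
by rewrite -scalerAr; apply/in_spanZ/xP/In_nth.
Qed.

Hypotheses (presA : presented_by s t Rel e a) (Rel_refl : reflected_by_injections Rel).
Hypotheses (P1 : in_span P 1)
  (Pe : forall i y, List.In y P -> in_span P (e i * y))
  (Pa : forall k y, List.In y P -> in_span P (a k * y)).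

(* The generators lie in the subalgebra [stabilizer]; by the universal property it is
   all of A, and then x = x * 1 lies in the span of P. *)
Lemma presented_in_span x : in_span P x.
Proof.
have [qrA relA UP] := presA.
pose e' i := Stabilizer (left_stabilizerP (Pe i)).
pose a' k := Stabilizer (left_stabilizerP (Pa k)).
have qr' : quiver_rep s t e' a'.
  have [ee sum_e ae] := qrA; split=> [i j|| k]; apply: val_inj.
  - by rewrite rmorphM /= ee; case: eqP.
  - by rewrite rmorph_sum rmorph1 -sum_e.
  - by rewrite !rmorphM /= -ae.
have rel' : Rel e' a' by apply: (Rel_refl stab_val_alg_hom val_inj _ _ relA).
have [[g [g_hom ge ga]] _] := UP _ e' a' qr' rel'.
have gK : stab_val \o g =1 id.
  apply: (UP _ e a qrA relA).2 (alg_hom_comp g_hom stab_val_alg_hom) _ _ _ _ _ => //.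
  - by move=> i; apply: (congr1 stab_val (ge i)).
  - by move=> k; apply: (congr1 stab_val (ga k)).
by have /asboolP := valP (g x); rewrite [val _]gK => /(_ 1 P1); rewrite mulr1.
Qed.

End PresentedSpan.

Lemma vtx_val k : (0 < k <= 6)%N -> val (vtx k) = k.-1.
Proof. by case/andP=> k_gt0 k_le6; rewrite /= inordK // prednK. Qed.

Lemma vtx_eqE i j : (0 < i <= 6)%N -> (0 < j <= 6)%N -> (vtx i == vtx j) = (i == j).
Proof.
move=> i_ok j_ok; rewrite -val_eqE /= !vtx_val //.
by move: i_ok j_ok; case: i => // i _; case: j.
Qed.

Lemma vtx_In (i : 'I_6) : List.In i [:: vtx 1; vtx 2; vtx 3; vtx 4; vtx 5; vtx 6].
Proof.
have -> : i = vtx i.+1 by apply: val_inj; rewrite vtx_val /= ?ltn_ord.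
by case: i => [[|[|[|[|[|[|]]]]]] ?] //=; do 6?[by left | right].
Qed.

Lemma mulrA_eq (R : pzSemiRingType) (u v w : R) : u * v = w -> forall x, x * u * v = x * w.
Proof. by move=> uv x; rewrite -mulrA uv. Qed.

Lemma mulrA_eq3 (R : pzSemiRingType) (u v w z : R) :
  u * v * w = z -> forall x, x * u * v * w = x * z.
Proof. by move=> uvw x; rewrite -!mulrA (mulrA u) uvw. Qed.

Section QuiverRep.
Variables (K : fieldType) (n : nat) (Ar : Type) (s t : Ar -> 'I_n) (C : algType K)
  (e : 'I_n -> C) (a : Ar -> C).
Hypothesis qr : quiver_rep s t e a.

Lemma quiver_idem_mul i j : e i * e j = if i == j then e i else 0.
Proof. by case: qr. Qed.

Lemma quiver_arrowE k : a k = e (s k) * a k * e (t k).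
Proof. by case: qr. Qed.

Lemma quiver_idem_arrow i k : e i * a k = if i == s k then a k else 0.
Proof.
rewrite quiver_arrowE !mulrA quiver_idem_mul.
by case: eqP => [->|_]; rewrite -?quiver_arrowE ?mul0r.
Qed.

Lemma quiver_arrow_idem k j : a k * e j = if t k == j then a k else 0.
Proof.
rewrite quiver_arrowE -!mulrA quiver_idem_mul.
by case: eqP => _; rewrite ?mulrA -?quiver_arrowE ?mulr0.
Qed.

Lemma quiver_arrow_mul0 k l : t k != s l -> a k * a l = 0.
Proof.
by move=> /negbTE tk_sl; rewrite (quiver_arrowE l) !mulrA quiver_arrow_idem tk_sl !mul0r.
Qed.

End QuiverRep.

Ltac quiver_simpl qr :=
  rewrite ?mulrA ?(quiver_idem_mul qr) ?(mulrA_eq (quiver_idem_mul qr _ _))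
    ?(quiver_idem_arrow qr) ?(mulrA_eq (quiver_idem_arrow qr _ _))
    ?(quiver_arrow_idem qr) ?(mulrA_eq (quiver_arrow_idem qr _ _)) /= ?vtx_eqE //=.

Ltac quiver_kill_noncomposable qr a :=
  repeat match goal with
  | |- context [?x * a ?k * a ?l] =>
      rewrite (mulrA_eq (quiver_arrow_mul0 qr (k := k) (l := l) _) x) ?mulr0;
      last by rewrite /= vtx_eqE
  | |- context [a ?k * a ?l] =>
      rewrite (quiver_arrow_mul0 qr (k := k) (l := l)); last by rewrite /= vtx_eqE
  end.

(* [rules] are relations oriented towards normal forms, and [rules_x] their variants
   (by mulrA_eq, mulrA_eq3) that apply inside longer left-associated products. *)
Ltac quiver_norm qr a rules rules_x :=
  repeat progress (quiver_simpl qr; quiver_kill_noncomposable qr a;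
    rewrite ?rules ?rules_x -?scalerAl -?scalerAr ?scalerA ?mul0r ?mulr0 ?scaler0).

Ltac span_mem :=
  solve [ exact: in_span0
        | apply: in_span_In; repeat first [left; reflexivity | right]
        | apply/in_spanZ/in_span_In; repeat first [left; reflexivity | right] ].

Section TrivialExtension.
Variables (K : fieldType) (B : falgType K).
Implicit Types (b c : B) (phi psi : 'Hom(B, K^o)).

Lemma dual_lactE b phi x : dual_lact b phi x = phi (x * b).
Proof. by rewrite lfunE_linear // => k u v; rewrite mulrDl -scalerAl linearP. Qed.

Lemma dual_ractE phi b x : dual_ract phi b x = phi (b * x).
Proof. by rewrite lfunE_linear // => k u v; rewrite mulrDr -scalerAr linearP. Qed.

Definition triv_ext := (B * 'Hom(B, K^o))%type.
HB.instance Definition _ := GRing.Lmodule.on triv_ext.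

Definition triv_ext_one : triv_ext := (1, 0).

Lemma triv_ext_mulA : associative (@triv_ext_mul K B).
Proof.
move=> [a f] [b g] [c h]; congr (_, _); first by rewrite /= mulrA.
by apply/lfunP => x; rewrite /= !add_lfunE !dual_lactE !dual_ractE !add_lfunE
  !dual_lactE !dual_ractE !mulrA addrA.
Qed.

Lemma triv_ext_mul1l : left_id triv_ext_one (@triv_ext_mul K B).
Proof.
move=> [a f]; congr (_, _); first by rewrite /= mul1r.
by apply/lfunP => x; rewrite /= add_lfunE dual_lactE dual_ractE zero_lfunE mulr1 addr0.
Qed.

Lemma triv_ext_mul1r : right_id triv_ext_one (@triv_ext_mul K B).
Proof.
move=> [a f]; congr (_, _); first by rewrite /= mulr1.
by apply/lfunP => x; rewrite /= add_lfunE dual_lactE dual_ractE zero_lfunE mul1r add0r.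
Qed.

Lemma triv_ext_mulDl : left_distributive (@triv_ext_mul K B) +%R.
Proof.
move=> [a f] [b g] [c h]; congr (_, _); first by rewrite /= mulrDl.
apply/lfunP => x; rewrite /= !add_lfunE !dual_lactE !dual_ractE !add_lfunE.
by rewrite mulrDr linearD /= addrACA.
Qed.

Lemma triv_ext_mulDr : right_distributive (@triv_ext_mul K B) +%R.
Proof.
move=> [a f] [b g] [c h]; congr (_, _); first by rewrite /= mulrDr.
apply/lfunP => x; rewrite /= !add_lfunE !dual_lactE !dual_ractE !add_lfunE.
by rewrite mulrDl linearD /= addrACA.
Qed.

Lemma triv_ext_one_neq0 : triv_ext_one != 0.
Proof. by apply/eqP => -[] /eqP; rewrite oner_eq0. Qed.

HB.instance Definition _ := GRing.Zmodule_isNzRing.Build triv_ext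
  triv_ext_mulA triv_ext_mul1l triv_ext_mul1r triv_ext_mulDl triv_ext_mulDr
  triv_ext_one_neq0.

Lemma triv_ext_scaleAl k (u v : triv_ext) : k *: (u * v) = (k *: u) * v.
Proof.
case: u v => [a f] [b g]; congr (_, _); first by rewrite /= scalerAl.
by apply/lfunP => x; rewrite /= !(add_lfunE, scale_lfunE, dual_lactE, dual_ractE)
  -scalerAr linearZ scalerDr.
Qed.

HB.instance Definition _ := GRing.Lmodule_isLalgebra.Build K triv_ext triv_ext_scaleAl.

Lemma triv_ext_scaleAr k (u v : triv_ext) : k *: (u * v) = u * (k *: v).
Proof.
case: u v => [a f] [b g]; congr (_, _); first by rewrite /= scalerAr.
by apply/lfunP => x; rewrite /= !(add_lfunE, scale_lfunE, dual_lactE, dual_ractE)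
  -scalerAl linearZ scalerDr.
Qed.

HB.instance Definition _ := GRing.Lalgebra_isAlgebra.Build K triv_ext triv_ext_scaleAr.

Lemma triv_ext_mul_inl b c : ((b, 0) : triv_ext) * (c, 0) = (b * c, 0).
Proof.
congr (_, _); apply/lfunP => x.
by rewrite /= add_lfunE dual_lactE dual_ractE !zero_lfunE addr0.
Qed.

Lemma triv_ext_mul_inl_inr b phi : ((b, 0) : triv_ext) * (0, phi) = (0, dual_lact b phi).
Proof.
congr (_, _); first exact: mulr0.
by apply/lfunP => x; rewrite /= add_lfunE dual_ractE zero_lfunE addr0.
Qed.

Lemma triv_ext_mul_inr_inl phi b : ((0, phi) : triv_ext) * (b, 0) = (0, dual_ract phi b).
Proof.
congr (_, _); first exact: mul0r.
by apply/lfunP => x; rewrite /= add_lfunE dual_lactE zero_lfunE add0r.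
Qed.

Lemma triv_ext_scale_inl k b : k *: ((b, 0) : triv_ext) = (k *: b, 0).
Proof. by congr (_, _); rewrite scaler0. Qed.

Lemma triv_ext_scale_inr k phi : k *: ((0, phi) : triv_ext) = (0, k *: phi).
Proof. by congr (_, _); rewrite scaler0. Qed.

Lemma dual_lactZ b k phi : dual_lact b (k *: phi) = k *: dual_lact b phi.
Proof. by apply/lfunP => x; rewrite scale_lfunE !dual_lactE scale_lfunE. Qed.

Lemma dual_ractZ k phi b : dual_ract (k *: phi) b = k *: dual_ract phi b.
Proof. by apply/lfunP => x; rewrite scale_lfunE !dual_ractE scale_lfunE. Qed.

Lemma dual_lactM b c phi : dual_lact (b * c) phi = dual_lact b (dual_lact c phi).
Proof. by apply/lfunP => x; rewrite !dual_lactE mulrA. Qed.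

End TrivialExtension.

Lemma delta_mx_mulE (K : fieldType) (n : nat) (i j k l : 'I_n.+1) :
  delta_mx i j * delta_mx k l = if j == k then delta_mx i l else 0 :> 'M[K]_n.+1.
Proof. by rewrite [LHS]mul_delta_mx_cond; case: eqP; rewrite ?mulr1n ?mulr0n. Qed.

Lemma thin_quiver_rep (K : fieldType) (n : nat) (Ar : Type) (s t : Ar -> 'I_n.+1)
    (c : Ar -> K) :
  quiver_rep s t (fun i => delta_mx i i) (fun k => c k *: delta_mx (s k) (t k)).
Proof.
split=> [i j|| k]; first by rewrite delta_mx_mulE; case: eqP => // ->.
  by rewrite -mx1_sum_delta.
by rewrite -scalerAr -scalerAl delta_mx_mulE eqxx delta_mx_mulE eqxx.
Qed.

Section MatrixCoefficients.
Variables (K : fieldType) (B : falgType K) (n : nat) (rho : B -> 'M[K]_n.+1).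
Hypothesis rho_hom : is_alg_hom rho.

Definition mx_coef i j : 'Hom(B, K^o) := linfun (fun x => rho x i j : K^o).

Lemma mx_coefE i j x : mx_coef i j x = rho x i j.
Proof. by rewrite lfunE_linear // => c u v; rewrite alg_homD // alg_homZ // !mxE. Qed.

Lemma mul_delta_mx_entry (M : 'M[K]_n.+1) p q i j :
  (M * delta_mx p q) i j = if q == j then M i p else 0.
Proof.
rewrite [LHS]mxE (bigD1 p) //= big1 => [|k /negbTE k_p]; last by rewrite mxE k_p mulr0.
by rewrite mxE eqxx eq_sym addr0; case: eqP; rewrite ?mulr1 ?mulr0.
Qed.

Lemma delta_mx_mul_entry (M : 'M[K]_n.+1) p q i j :
  (delta_mx p q * M) i j = if i == p then M q j else 0.
Proof.
rewrite [LHS]mxE (bigD1 q) //= big1 => [|k /negbTE k_q]; last by rewrite mxE k_q andbF mul0r.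
by rewrite mxE eqxx andbT addr0; case: eqP; rewrite ?mul1r ?mul0r.
Qed.

Lemma dual_lact_mx_coef b c p q : rho b = c *: delta_mx p q ->
  forall i j, dual_lact b (mx_coef i j) = (if q == j then c else 0) *: mx_coef i p.
Proof.
move=> rho_b i j; apply/lfunP => x; rewrite dual_lactE scale_lfunE !mx_coefE alg_homM // rho_b.
by rewrite -scalerAr mxE mul_delta_mx_entry scale_regularE; case: eqP; rewrite ?mulr0 ?mul0r.
Qed.

Lemma dual_ract_mx_coef b c p q : rho b = c *: delta_mx p q ->
  forall i j, dual_ract (mx_coef i j) b = (if i == p then c else 0) *: mx_coef q j.
Proof.
move=> rho_b i j; apply/lfunP => x; rewrite dual_ractE scale_lfunE !mx_coefE alg_homM // rho_b.
by rewrite -scalerAl mxE delta_mx_mul_entry scale_regularE; case: eqP; rewrite ?mulr0 ?mul0r.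
Qed.

End MatrixCoefficients.

Section DualBasis.
Variables (K : fieldType) (V : vectType K) (n : nat).
Variables (x : nat -> V) (psi : nat -> 'Hom(V, K^o)) (m : nat -> K).
Hypotheses (psi_x : forall q r, (q < n)%N -> (r < n)%N -> psi q (x r) = (q == r)%:R * m q)
  (m_neq0 : forall q, (q < n)%N -> m q != 0)
  (x_span : forall v, exists c : nat -> K, v = \sum_(r < n) c r *: x r).

Lemma dual_coord (c : nat -> K) q : (q < n)%N ->
  psi q (\sum_(r < n) c r *: x r) = c q * m q.
Proof.
move=> lt_qn; rewrite linear_sum -[RHS](sum_ord_delta (W := K^o) (fun r => c r * m q) lt_qn).
by apply: eq_bigr => r _; rewrite linearZ /= psi_x //; apply: mulrCA.
Qed.

Lemma dual_expand (chi : 'Hom(V, K^o)) : chi = \sum_(q < n) (chi (x q) / m q) *: psi q.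
Proof.
apply/lfunP => v; have [c ->] := x_span v; rewrite sum_lfunE linear_sum.
apply: eq_bigr => q _; rewrite scale_lfunE dual_coord // linearZ /= !scale_regularE.
by rewrite mulrCA divfK ?m_neq0.
Qed.

Lemma dual_coordK v : v = \sum_(q < n) (psi q v / m q) *: x q.
Proof.
have [c ->] := x_span v; apply: eq_bigr => q _.
by rewrite dual_coord // mulfK ?m_neq0.
Qed.

Variables (U : lmodType K) (f : {linear U -> (V * 'Hom(V, K^o))%type}) (u w : nat -> U).
Hypotheses (f_u : forall q, (q < n)%N -> f (u q) = (x q, 0))
  (f_w : forall q, (q < n)%N -> f (w q) = (0, psi q)).

Definition dual_comb (c d : nat -> K) := \sum_(q < n) c q *: u q + \sum_(q < n) d q *: w q.

Lemma dual_comb_image (c d : nat -> K) :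
  f (dual_comb c d) = (\sum_(q < n) c q *: x q, \sum_(q < n) d q *: psi q).
Proof.
rewrite linearD !linear_sum.
under eq_bigr do rewrite linearZ f_u //.
under [X in _ + X]eq_bigr do rewrite linearZ f_w //.
rewrite !pair_sum /= [X in (_, X) + _]big1 ?[X in _ + (X, _)]big1 => [||q _];
  last exact: scaler0.
  by congr (_, _); rewrite ?addr0 ?add0r.
by move=> q _; rewrite scaler0.
Qed.

Lemma dual_pair_bijective : (forall z, exists c d, z = dual_comb c d) -> bijective f.
Proof.
move=> uw_span.
exists (fun p : (V * 'Hom(V, K^o))%type =>
  dual_comb (fun q => psi q p.1 / m q) (fun q => p.2 (x q) / m q)) => [z|[v chi]].
  have [c [d ->]] := uw_span z; rewrite dual_comb_image /=.
  congr (_ + _); apply: eq_bigr => q _.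
    by rewrite dual_coord // mulfK ?m_neq0.
  rewrite sum_lfunE (eq_bigr (fun i : 'I_n => (q == i :> nat)%:R *: (d i * m i : K^o))).
    by rewrite (sum_ord_delta (W := K^o) (fun i => d i * m i)) // mulfK ?m_neq0.
  by move=> i _; rewrite scale_lfunE psi_x // eq_sym scale_regularE mulrCA.
by rewrite dual_comb_image /= -dual_expand -dual_coordK.
Qed.

End DualBasis.

Section BAlgebra.
Variables (K : fieldType) (lam : K) (B : algType K) (eB : 'I_6 -> B) (aB : BArr -> B).

Local Notation α := (aB Ba_alpha).
Local Notation σ := (aB Ba_sigma).
Local Notation γ := (aB Ba_gamma).
Local Notation β := (aB Ba_beta).
Local Notation ξ := (aB Ba_xi).
Local Notation η := (aB Ba_eta).
Local Notation μ := (aB Ba_mu).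
Local Notation ω := (aB Ba_omega).

Definition B_paths : seq B :=
  [:: eB (vtx 1); eB (vtx 2); eB (vtx 3); eB (vtx 4); eB (vtx 5); eB (vtx 6);
      α; σ; γ; β; ξ; η; μ; ω; η * γ; η * β; μ * α; μ * σ].

Hypotheses (qrB : quiver_rep B_src B_tgt eB aB) (relB : B_rel lam eB aB).

Lemma B_xi_alpha : ξ * α = η * γ. Proof. by case: relB. Qed.
Lemma B_xi_sigma : ξ * σ = lam *: (η * β). Proof. by case: relB. Qed.
Lemma B_omega_gamma : ω * γ = μ * α. Proof. by case: relB. Qed.
Lemma B_omega_beta : ω * β = μ * σ. Proof. by case: relB. Qed.

Let B_rules := (B_xi_alpha, B_xi_sigma, B_omega_gamma, B_omega_beta).
Let B_rules_x := (mulrA_eq B_xi_alpha, mulrA_eq B_xi_sigma,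
                  mulrA_eq B_omega_gamma, mulrA_eq B_omega_beta).

Lemma B_paths_one : in_span B_paths 1.
Proof.
case: qrB => _ <- _; apply: in_span_sum => i.
by have i_in := vtx_In i; do ![case: i_in => [<-|i_in]] => //; span_mem.
Qed.

Lemma B_paths_idem i y : List.In y B_paths -> in_span B_paths (eB i * y).
Proof.
move=> y_in; do ![case: y_in => [<-|y_in]] => //; quiver_norm qrB aB B_rules B_rules_x;
  case: eqP => [?|_]; subst; quiver_norm qrB aB B_rules B_rules_x; span_mem.
Qed.

Lemma B_paths_arrow k y : List.In y B_paths -> in_span B_paths (aB k * y).
Proof.
move=> y_in; do ![case: y_in => [<-|y_in]] => //; case: k;
  quiver_norm qrB aB B_rules B_rules_x; span_mem.
Qed.

End BAlgebra.

Lemma B_rel_reflected (K : fieldType) (lam : K) : reflected_by_injections (B_rel lam).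
Proof.
move=> C D f e' a' e a f_hom f_inj fe fa [r1 r2 r3 r4].
by split; apply: f_inj; rewrite ?(alg_homZ f_hom) ?(alg_homM f_hom) ?fa.
Qed.

Lemma B_span (K : fieldType) (lam : K) (B : algType K) (eB : 'I_6 -> B) (aB : BArr -> B) :
  presented_by B_src B_tgt (B_rel lam) eB aB -> forall x, in_span (B_paths eB aB) x.
Proof.
move=> presB; have [qrB relB _] := presB.
apply: (presented_in_span presB).
- exact: B_rel_reflected.
- exact: B_paths_one qrB.
- exact: B_paths_idem qrB.
- exact: B_paths_arrow qrB relB.
Qed.

(* Arrow coefficients of two thin representations of B, vanishing on the arrows at
   vertex 6, resp. vertex 5.  One thin representation nonzero on all arrows exists only
   when lam = 1. *)
Definition thin5 (K : fieldType) (lam : K) (k : BArr) : K :=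
  match k with Ba_sigma => lam | Ba_mu | Ba_omega => 0 | _ => 1 end.
Definition thin6 (K : fieldType) (k : BArr) : K :=
  match k with Ba_xi | Ba_eta => 0 | _ => 1 end.

Lemma B_rel_thin5 (K : fieldType) (lam : K) :
  B_rel lam (fun i => delta_mx i i : 'M[K]_6)
    (fun k => thin5 lam k *: delta_mx (B_src k) (B_tgt k)).
Proof.
by split; rewrite /= -!scalerAl -!scalerAr !scalerA !delta_mx_mulE !eqxx
  ?mul1r ?mulr1 ?mul0r ?mulr0.
Qed.

Lemma B_rel_thin6 (K : fieldType) (lam : K) :
  B_rel lam (fun i => delta_mx i i : 'M[K]_6)
    (fun k => thin6 K k *: delta_mx (B_src k) (B_tgt k)).
Proof.
by split; rewrite /= -!scalerAl -!scalerAr !scalerA !delta_mx_mulE !eqxx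
  ?mul1r ?mulr1 ?mul0r ?mulr0.
Qed.

Section LambdaAlgebra.
Variables (K : fieldType) (lam : K) (A : algType K) (eA : 'I_6 -> A) (aA : LArr -> A).

Local Notation α := (aA La_alpha).
Local Notation β := (aA La_beta).
Local Notation γ := (aA La_gamma).
Local Notation δ := (aA La_delta).
Local Notation ε := (aA La_eps).
Local Notation η := (aA La_eta).
Local Notation ξ := (aA La_xi).
Local Notation ρ := (aA La_rho).
Local Notation σ := (aA La_sigma).
Local Notation μ := (aA La_mu).
Local Notation ν := (aA La_nu).
Local Notation ω := (aA La_omega).

Definition L_paths_B : seq A :=
  [:: eA (vtx 1); eA (vtx 2); eA (vtx 3); eA (vtx 4); eA (vtx 5); eA (vtx 6);
      α; σ; γ; β; ξ; η; μ; ω; η * γ; η * β; μ * α; μ * σ].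

Definition L_paths_D : seq A :=
  [:: δ * η * γ; ε * η * β; α * δ * ξ; β * ε * η; η * β * ε; μ * α * ν;
      δ * ξ; ε * ξ; δ * η; ε * η; α * δ; β * ε; α * ν; β * ρ; δ; ε; ν; ρ].

Definition L_paths := L_paths_B ++ L_paths_D.

Hypotheses (lam_neq0 : lam != 0) (qrA : quiver_rep L_src L_tgt eA aA)
  (relA : L_rel lam eA aA).

Ltac L_rel_case :=
  by case: relA => [[? ? ? ? ?] [? ? ? ? ?] [? ?] [? ? ? ? ?] [[? ? ? ?] ? ? ?]].

Lemma L_gamma_delta : γ * δ = lam *: (β * ε). Proof. L_rel_case. Qed.
Lemma L_gamma_nu : γ * ν = β * ρ. Proof. L_rel_case. Qed.
Lemma L_xi_alpha : ξ * α = η * γ. Proof. L_rel_case. Qed.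
Lemma L_xi_sigma : ξ * σ = lam *: (η * β). Proof. L_rel_case. Qed.
Lemma L_rho_mu : ρ * μ = ε * ξ. Proof. L_rel_case. Qed.
Lemma L_rho_omega : ρ * ω = lam *: (ε * η). Proof. L_rel_case. Qed.
Lemma L_sigma_eps : σ * ε = α * δ. Proof. L_rel_case. Qed.
Lemma L_sigma_rho : σ * ρ = α * ν. Proof. L_rel_case. Qed.
Lemma L_nu_mu : ν * μ = δ * ξ. Proof. L_rel_case. Qed.
Lemma L_nu_omega : ν * ω = δ * η. Proof. L_rel_case. Qed.
Lemma L_omega_beta : ω * β = μ * σ. Proof. L_rel_case. Qed.
Lemma L_omega_gamma : ω * γ = μ * α. Proof. L_rel_case. Qed.
Lemma L_delta_eta_beta : δ * η * β = 0. Proof. L_rel_case. Qed.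
Lemma L_mu_alpha_delta : μ * α * δ = 0. Proof. L_rel_case. Qed.
Lemma L_gamma_delta_xi : γ * δ * ξ = 0. Proof. L_rel_case. Qed.
Lemma L_omega_beta_eps : ω * β * ε = 0. Proof. L_rel_case. Qed.
Lemma L_sigma_eps_eta : σ * ε * η = 0. Proof. L_rel_case. Qed.
Lemma L_eps_xi_alpha : ε * ξ * α = 0. Proof. L_rel_case. Qed.
Lemma L_xi_sigma_rho : ξ * σ * ρ = 0. Proof. L_rel_case. Qed.

Lemma L_beta_eps : β * ε = lam^-1 *: (γ * δ).
Proof. by rewrite L_gamma_delta scalerA mulVf // scale1r. Qed.
Lemma L_eps_eta : ε * η = lam^-1 *: (ρ * ω).
Proof. by rewrite L_rho_omega scalerA mulVf // scale1r. Qed.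
Lemma L_eta_beta : η * β = lam^-1 *: (ξ * σ).
Proof. by rewrite L_xi_sigma scalerA mulVf // scale1r. Qed.

(* With the binomial relations oriented towards the words of L_paths, these derived
   monomial relations complete them to a confluent rewriting system on paths. *)
Lemma L_alpha_delta_eta : α * δ * η = 0.
Proof. by rewrite -L_sigma_eps L_sigma_eps_eta. Qed.
Lemma L_beta_eps_xi : β * ε * ξ = 0.
Proof. by rewrite L_beta_eps -scalerAl L_gamma_delta_xi scaler0. Qed.
Lemma L_eps_eta_gamma : ε * η * γ = 0.
Proof. by rewrite -mulrA -L_xi_alpha mulrA L_eps_xi_alpha. Qed.
Lemma L_eta_beta_rho : η * β * ρ = 0.
Proof. by rewrite L_eta_beta -scalerAl L_xi_sigma_rho scaler0. Qed.
Lemma L_beta_eps_eta_beta : β * ε * η * β = 0.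
Proof. by rewrite L_beta_eps -!scalerAl -!(mulrA γ) L_delta_eta_beta mulr0 scaler0. Qed.
Lemma L_eps_eta_beta_eps : ε * η * β * ε = 0.
Proof. by rewrite L_eps_eta -!scalerAl -!(mulrA ρ) L_omega_beta_eps mulr0 scaler0. Qed.
Lemma L_eta_beta_eps_eta : η * β * ε * η = 0.
Proof. by rewrite L_eta_beta -!scalerAl -!(mulrA ξ) L_sigma_eps_eta mulr0 scaler0. Qed.

Let L_rules := (L_gamma_delta, L_gamma_nu, L_xi_alpha, L_xi_sigma, L_rho_mu, L_rho_omega,
  L_sigma_eps, L_sigma_rho, L_nu_mu, L_nu_omega, L_omega_beta, L_omega_gamma,
  (L_alpha_delta_eta, L_beta_eps_xi, L_delta_eta_beta, L_eps_eta_gamma, L_eta_beta_rho,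
   L_mu_alpha_delta, L_beta_eps_eta_beta, L_eps_eta_beta_eps, L_eta_beta_eps_eta)).
Let L_rules_x := (mulrA_eq L_gamma_delta, mulrA_eq L_gamma_nu, mulrA_eq L_xi_alpha,
  mulrA_eq L_xi_sigma, mulrA_eq L_rho_mu, mulrA_eq L_rho_omega, mulrA_eq L_sigma_eps,
  mulrA_eq L_sigma_rho, mulrA_eq L_nu_mu, mulrA_eq L_nu_omega, mulrA_eq L_omega_beta,
  mulrA_eq L_omega_gamma,
  (mulrA_eq3 L_alpha_delta_eta, mulrA_eq3 L_beta_eps_xi, mulrA_eq3 L_delta_eta_beta,
   mulrA_eq3 L_eps_eta_gamma, mulrA_eq3 L_eta_beta_rho, mulrA_eq3 L_mu_alpha_delta)).

Lemma L_paths_one : in_span L_paths 1.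
Proof.
case: qrA => _ <- _; apply: in_span_sum => i.
by have i_in := vtx_In i; do ![case: i_in => [<-|i_in]] => //; span_mem.
Qed.

Lemma L_paths_idem i y : List.In y L_paths -> in_span L_paths (eA i * y).
Proof.
move=> y_in; do ![case: y_in => [<-|y_in]] => //; quiver_norm qrA aA L_rules L_rules_x;
  case: eqP => [?|_]; subst; quiver_norm qrA aA L_rules L_rules_x; span_mem.
Qed.

Lemma L_paths_arrow k y : List.In y L_paths -> in_span L_paths (aA k * y).
Proof.
move=> y_in; do ![case: y_in => [<-|y_in]] => //; case: k;
  quiver_norm qrA aA L_rules L_rules_x; span_mem.
Qed.

End LambdaAlgebra.

Lemma L_rel_reflected (K : fieldType) (lam : K) : reflected_by_injections (L_rel lam).
Proof.
move=> C D f e' a' e a f_hom f_inj fe fa.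
move=> [[? ? ? ? ?] [? ? ? ? ?] [? ?] [? ? ? ? ?] [[? ? ? ?] ? ? ?]].
by do !split; apply: f_inj; rewrite ?(alg_homZ f_hom) ?(alg_homM f_hom) ?fa ?(alg_hom0 f_hom).
Qed.

Lemma L_span (K : fieldType) (lam : K) (A : algType K) (eA : 'I_6 -> A) (aA : LArr -> A) :
  lam != 0 -> presented_by L_src L_tgt (L_rel lam) eA aA ->
  forall x, in_span (L_paths eA aA) x.
Proof.
move=> lam_neq0 presA; have [qrA relA _] := presA.
apply: (presented_in_span presA).
- exact: L_rel_reflected.
- exact: L_paths_one qrA.
- exact: L_paths_idem qrA.
- exact: L_paths_arrow lam_neq0 qrA relA.
Qed.

Section TrivialExtensionModel.
Variables (K : fieldType) (lam : K) (B : falgType K) (eB : 'I_6 -> B) (aB : BArr -> B).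
Variables (rho5 rho6 : B -> 'M[K]_6).
Hypotheses (presB : presented_by B_src B_tgt (B_rel lam) eB aB)
  (rho5_hom : is_alg_hom rho5) (rho6_hom : is_alg_hom rho6)
  (rho5e : forall i, rho5 (eB i) = delta_mx i i)
  (rho6e : forall i, rho6 (eB i) = delta_mx i i)
  (rho5a : forall k, rho5 (aB k) = thin5 lam k *: delta_mx (B_src k) (B_tgt k))
  (rho6a : forall k, rho6 (aB k) = thin6 K k *: delta_mx (B_src k) (B_tgt k)).

(* [coef5 i j x] is the coefficient of the path i -> j in x, read off through rho5. *)
Local Notation coef5 i j := (mx_coef rho5 (vtx i) (vtx j)).
Local Notation coef6 i j := (mx_coef rho6 (vtx i) (vtx j)).

Ltac coef_on_paths :=
  apply: (lfun_eq_on_span (B_span presB)) => y;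
  do ![case=> [<-|]] => //;
  rewrite ?zero_lfunE ?scale_lfunE !mx_coefE ?(alg_homM rho5_hom) ?(alg_homM rho6_hom)
    ?rho5e ?rho6e ?rho5a ?rho6a /= -?scalerAl -?scalerAr ?scalerA ?delta_mx_mulE ?eqxx
    ?mxE ?vtx_eqE //= ?scale_regularE ?mulr1 ?mulr0 //.

Lemma coef56_41 : coef5 4 1 = coef6 4 1. Proof. coef_on_paths. Qed.
Lemma coef56_42 : coef5 4 2 = coef6 4 2. Proof. coef_on_paths. Qed.
Lemma coef56_31 : coef5 3 1 = coef6 3 1. Proof. coef_on_paths. Qed.
Lemma coef56_32 : coef5 3 2 = lam *: coef6 3 2. Proof. coef_on_paths. Qed.
Lemma coef5_34 : coef5 3 4 = 0. Proof. coef_on_paths. Qed.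
Lemma coef5_43 : coef5 4 3 = 0. Proof. coef_on_paths. Qed.
Lemma coef6_34 : coef6 3 4 = 0. Proof. coef_on_paths. Qed.
Lemma coef6_43 : coef6 4 3 = 0. Proof. coef_on_paths. Qed.
Lemma coef6_12 : coef6 1 2 = 0. Proof. coef_on_paths. Qed.
Lemma coef6_21 : coef6 2 1 = 0. Proof. coef_on_paths. Qed.

Lemma rho5e_scaled i : rho5 (eB i) = 1 *: delta_mx i i.
Proof. by rewrite scale1r. Qed.
Lemma rho6e_scaled i : rho6 (eB i) = 1 *: delta_mx i i.
Proof. by rewrite scale1r. Qed.

Definition triv_idem i : triv_ext B := (eB i, 0).

Definition triv_arrow (k : LArr) : triv_ext B :=
  match k with
  | La_alpha => (aB Ba_alpha, 0) | La_beta => (aB Ba_beta, 0)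
  | La_gamma => (aB Ba_gamma, 0) | La_sigma => (aB Ba_sigma, 0)
  | La_xi => (aB Ba_xi, 0) | La_eta => (aB Ba_eta, 0)
  | La_mu => (aB Ba_mu, 0) | La_omega => (aB Ba_omega, 0)
  | La_delta => (0, lam *: coef5 5 1) | La_eps => (0, coef5 5 2)
  | La_nu => (0, lam *: coef6 6 1) | La_rho => (0, lam *: coef6 6 2)
  end.

Let qrB : quiver_rep B_src B_tgt eB aB. Proof. by case: presB. Qed.
Let relB : B_rel lam eB aB. Proof. by case: presB. Qed.

Ltac triv_norm :=
  repeat progress (rewrite /= ?triv_ext_mul_inl ?triv_ext_mul_inl_inr ?triv_ext_mul_inr_inl
    ?triv_ext_scale_inl ?triv_ext_scale_inr
    ?dual_lactZ ?dual_ractZ ?dual_lactM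
    ?(dual_lact_mx_coef rho5_hom (rho5a _)) ?(dual_ract_mx_coef rho5_hom (rho5a _))
    ?(dual_lact_mx_coef rho5_hom (rho5e_scaled _))
    ?(dual_ract_mx_coef rho5_hom (rho5e_scaled _))
    ?(dual_lact_mx_coef rho6_hom (rho6a _)) ?(dual_ract_mx_coef rho6_hom (rho6a _))
    ?(dual_lact_mx_coef rho6_hom (rho6e_scaled _))
    ?(dual_ract_mx_coef rho6_hom (rho6e_scaled _))
    ?(quiver_idem_arrow qrB) ?(quiver_arrow_idem qrB)
    /= ?vtx_eqE //= ?scalerA ?scale0r ?scaler0 ?scale1r ?mul1r ?mulr1 ?mul0r ?mulr0
    ?coef56_41 ?coef56_42 ?coef56_31 ?coef56_32 ?coef5_34 ?coef5_43
    ?coef6_34 ?coef6_43 ?coef6_12 ?coef6_21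
    ?(B_xi_alpha relB) ?(B_xi_sigma relB) ?(B_omega_gamma relB) ?(B_omega_beta relB)).

Lemma triv_quiver_rep : quiver_rep L_src L_tgt triv_idem triv_arrow.
Proof.
split=> [i j||k].
- by rewrite triv_ext_mul_inl (quiver_idem_mul qrB); case: eqP.
- by rewrite /triv_idem pair_sum [X in (_, X)]big1 //; case: qrB => _ ->.
- by case: k; triv_norm.
Qed.

Lemma triv_L_rel : L_rel lam triv_idem triv_arrow.
Proof. by split; split; triv_norm. Qed.

Definition dual_paths : seq 'Hom(B, K^o) :=
  [:: lam *: coef6 1 1; coef6 2 2; lam *: coef5 3 3; coef5 4 4; coef5 5 5; lam *: coef6 6 6;
      lam *: coef6 3 1; lam *: coef6 3 2; lam *: coef6 4 1; coef6 4 2; lam *: coef5 5 3;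
      coef5 5 4; lam *: coef6 6 3; lam *: coef6 6 4;
      lam *: coef5 5 1; coef5 5 2; lam *: coef6 6 1; lam *: coef6 6 2].

Definition dual_scale : seq K :=
  [:: lam; 1; lam; 1; 1; lam; lam; lam; lam; 1; lam; 1; lam; lam; lam; 1; lam; lam].

Lemma dual_paths_pairing q r : (q < 18)%N -> (r < 18)%N ->
  dual_paths`_q (B_paths eB aB)`_r = (q == r)%:R * dual_scale`_q.
Proof.
move=> lt_q lt_r; do 18?[case: q lt_q => [|q] lt_q //]; do 18?[case: r lt_r => [|r] lt_r //].
all: rewrite /= ?scale_lfunE !mx_coefE ?(alg_homM rho5_hom) ?(alg_homM rho6_hom)
  ?rho5e ?rho6e ?rho5a ?rho6a /= -?scalerAl -?scalerAr ?scalerA ?delta_mx_mulE ?eqxx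
  ?mxE ?vtx_eqE //= ?scale_regularE ?mulr1 ?mulr0 ?mul1r ?mul0r //.
Qed.

Variables (A : algType K) (eA : 'I_6 -> A) (aA : LArr -> A) (f : A -> triv_ext B).
Hypotheses (f_hom : is_alg_hom f) (fe : forall i, f (eA i) = triv_idem i)
  (fa : forall k, f (aA k) = triv_arrow k).

Lemma map_f_paths_B : map f (L_paths_B eA aA) = [seq (y, 0) | y <- B_paths eB aB].
Proof. by rewrite /= !(alg_homM f_hom) !fe !fa /= !triv_ext_mul_inl. Qed.

Lemma map_f_paths_D : map f (L_paths_D aA) = [seq (0, phi) | phi <- dual_paths].
Proof. by rewrite /= !(alg_homM f_hom) !fa; triv_norm. Qed.

Hypotheses (lam_neq0 : lam != 0) (presA : presented_by L_src L_tgt (L_rel lam) eA aA).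

Lemma triv_ext_map_bijective : bijective f.
Proof.
have f_lin : linear f by case: f_hom.
apply: (@dual_pair_bijective K B 18 (fun r => (B_paths eB aB)`_r) (fun q => dual_paths`_q)
  (fun q => dual_scale`_q) _ _ _ _ (linear_of f_lin)
  (fun q => (L_paths_B eA aA)`_q) (fun q => (L_paths_D aA)`_q)).
- exact: dual_paths_pairing.
- have scale_neq0 : all (fun c : K => c != 0) dual_scale by rewrite /= lam_neq0 oner_neq0.
  by move=> q lt_q; move/(all_nthP 0): scale_neq0; apply.
- exact: B_span presB.
- by move=> q lt_q; rewrite /= -(nth_map 0 0) // map_f_paths_B (nth_map 0).
- by move=> q lt_q; rewrite /= -(nth_map 0 0) // map_f_paths_D (nth_map 0).
- move=> z; have [c [d ->]] :=
    in_span_cat (s1 := L_paths_B eA aA) (s2 := L_paths_D aA) (L_span lam_neq0 presA z).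
  by exists c, d.
Qed.

End TrivialExtensionModel.

Theorem lemma6p2 (K : closedFieldType) (lam : K) (hlam : lam != 0)
    (A : algType K) (eA : 'I_6 -> A) (aA : LArr -> A)
    (B : falgType K) (eB : 'I_6 -> B) (aB : BArr -> B) :
  presented_by L_src L_tgt (L_rel lam) eA aA ->
  presented_by B_src B_tgt (B_rel lam) eB aB ->
  exists phi : A -> B * 'Hom(B, K^o), iso_triv_ext phi.
Proof.
move=> presA presB; have [_ _ UPA] := presA; have [_ _ UPB] := presB.
have [[rho5 [rho5_hom rho5e rho5a]] _] :=
  UPB _ _ _ (thin_quiver_rep B_src B_tgt (thin5 lam)) (B_rel_thin5 lam).
have [[rho6 [rho6_hom rho6e rho6a]] _] :=
  UPB _ _ _ (thin_quiver_rep B_src B_tgt (thin6 K)) (B_rel_thin6 lam).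
have [[f [f_hom fe fa]] _] := UPA _ _ _
  (triv_quiver_rep presB rho5_hom rho6_hom rho5e rho6e)
  (triv_L_rel presB rho5_hom rho6_hom rho5e rho6e rho5a rho6a).
exists f; have [f_lin f_mul f_one] := f_hom; split=> //.
exact: (triv_ext_map_bijective presB rho5_hom rho6_hom rho5e rho6e rho5a rho6a f_hom fe fa
  hlam presA).
Qed.
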